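(* Let $R$ be a principal ideal domain and let $P$ be a lattice equipped with a compatible abelian group structure. Let $M=\bigoplus_{a\in P}M_a$ be a persistence module over $R$ indexed by $P$, viewed as a $P$-graded $R[U_0]$-module, such that each $M_a$ is a finitely generated $R$-module. Then $M$ is graded projective if and only if $M$ is graded free.
   Context: A lattice is a partially ordered set $(P,\le)$ in which every two elements $x,y$ have a join $x\vee y$ (least upper bound) and a meet $x\wedge y$ (greatest lower bound). $P$ has a compatible abelian group structure if $(P,+,0)$ is an abelian group and $a\le b$ implies $a+c\le b+c$ for all $a,b,c\in P$. Let $U_0=\{s\in P: s\ge 0\}$, a commutative monoid under $+$, and let $R[U_0]$ be its monoid ring: elements are finite formal sums $\sum_{s\in U_0}c_st^s$ with $c_s\in R$, $t^st^{s'}=t^{s+s'}$, graded by $\deg(ct^s)=s$. A persistence module over $R$ indexed by $P$ is a functor from $P$ (viewed as a category with a morphism $a\to b$ iff $a\le b$) to $R$-modules; equivalently a $P$-graded $R[U_0]$-module $M=\bigoplus_{a\in P}M_a$, where for $m\in M_a$ and $s\in U_0$, $t^s\cdot m$ is the image of $m$ under the structure map $M_a\to M_{a+s}$. Morphisms are degree-preserving $R[U_0]$-homomorphisms. $M$ is graded free if it has an $R[U_0]$-basis of homogeneous elements; $M$ is graded projective if it is a graded direct summand of a graded free module (equivalently, it has the lifting property against graded epimorphisms in the category of graded modules). *)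

From HB Require Import structures.
From mathcomp Require Import all_boot all_order all_algebra.
Set Implicit Arguments. Unset Strict Implicit. Unset Printing Implicit Defensive.
Import GRing.Theory.
Local Open Scope ring_scope.

Definition is_ideal (R : comPzRingType) (I : R -> Prop) : Prop :=
  [/\ I 0, (forall x y, I x -> I y -> I (x + y)) & (forall r x, I x -> I (r * x))].

Definition PID (R : idomainType) : Prop :=
  forall I : R -> Prop, is_ideal I -> exists g : R, forall x, I x <-> exists r, x = r * g.

Definition is_lattice_order (P : Type) (le : rel P) : Prop :=
  [/\ (forall x, le x x),
      (forall x y, le x y -> le y x -> x = y),
      (forall x y z, le x y -> le y z -> le x z),
      (forall x y, exists j, [/\ le x j, le y j & forall z, le x z -> le y z -> le j z])
    & (forall x y, exists m, [/\ le m x, le m y & forall z, le z x -> le z y -> le z m])].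

Definition compatible (P : zmodType) (le : rel P) : Prop :=
  forall a b c, le a b -> le (a + c) (b + c).

(* Persistence module over R indexed by (P, le): a functor from the poset P
   to R-modules. The structure map pm_map a b is only meaningful (and only
   constrained) when le a b. *)
Record pmod (R : pzRingType) (P : Type) (le : rel P) := PMod {
  pm_obj :> P -> lmodType R;
  pm_map : forall a b, {linear pm_obj a -> pm_obj b};
  pm_id : forall a x, le a a -> pm_map a a x = x;
  pm_comp : forall a b c x, le a b -> le b c ->
     pm_map a c x = pm_map b c (pm_map a b x)
}.

(* Morphisms of persistence modules = degree-preserving R[U_0]-homomorphisms. *)
Definition pmod_hom (R : pzRingType) (P : Type) (le : rel P) (M N : @pmod R P le)
  (f : forall a, M a -> N a) : Prop :=
  (forall a, linear (f a)) /\
  (forall a b x, le a b -> f b (pm_map M a b x) = pm_map N a b (f a x)).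

Definition fg_module (R : pzRingType) (V : lmodType R) : Prop :=
  exists s : seq V, forall x : V, exists c : seq R,
    x = \sum_(p <- zip s c) p.2 *: p.1.

(* Graded free: there is a family of homogeneous elements gen i in degree
   deg i forming an R[U_0]-basis. Unfolded degreewise: since t^s acts from
   M_b to M_(b+s) by the structure map, each M_a is the free R-module on the
   elements pm_map (deg i) a (gen i) with le (deg i) a. *)
Definition graded_free (R : pzRingType) (P : Type) (le : rel P) (M : @pmod R P le) : Prop :=
  exists (I : eqType) (deg : I -> P) (gen : forall i, M (deg i)),
    (forall a (x : M a), exists (s : seq I) (c : seq R),
        all (fun i => le (deg i) a) s /\
        x = \sum_(p <- zip s c) p.2 *: pm_map M (deg p.1) a (gen p.1)) /\
    (forall a (s : seq I) (c : seq R),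
        uniq s -> size c = size s -> all (fun i => le (deg i) a) s ->
        \sum_(p <- zip s c) p.2 *: pm_map M (deg p.1) a (gen p.1) = 0 ->
        all (fun r => r == 0) c).

Definition graded_projective (R : pzRingType) (P : Type) (le : rel P) (M : @pmod R P le) : Prop :=
  exists (F : @pmod R P le) (i : forall a, M a -> F a) (p : forall a, F a -> M a),
    [/\ graded_free F, pmod_hom i, pmod_hom p & forall a x, p a (i a x) = x].

From HB Require Import structures.
From mathcomp Require Import all_boot all_order all_algebra.
From Stdlib Require Import IndefiniteDescription.
Set Implicit Arguments. Unset Strict Implicit. Unset Printing Implicit Defensive.
Import GRing.Theory.
Local Open Scope ring_scope.

(* A graded projective M is a retract (p \o i = id) of a graded free F with
   basis g_j in degrees dg j.  For m in M_a, the coordinates of i m along the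
   g_j born exactly in degree a are its fresh coordinates.  As M_a is finitely
   generated they lie in a finitely generated free R-module, so over the PID R
   their image is free; lifting a basis of that image to M_a, for every a,
   yields a basis of M.  Independence: in a relation, the fresh coordinates in
   a maximal degree only see the lifts of that degree.  Spanning: each p (g_j)
   differs from a generated element by one whose image under i only involves
   generators of strictly smaller degree, and finite generation makes this
   descent terminate. *)

Definition linear_of (R : pzRingType) (U V : lmodType R) (f : U -> V) (hf : linear f) :
  {linear U -> V} := HB.pack f (GRing.isLinear.Build R U V *:%R f hf).

Definition scalar_of (R : pzRingType) (U : lmodType R) (f : U -> R) (hf : scalar f) :
  {scalar U} := HB.pack f (GRing.isLinear.Build R U R^o *%R f hf).

Lemma mem_zip1 (S T : eqType) (s : seq S) (t : seq T) q : q \in zip s t -> q.1 \in s.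
Proof.
elim: s t => [|x s IH] [|y t] //; rewrite /= !in_cons => /orP [/eqP -> | /IH ->].
  by rewrite eqxx.
by rewrite orbT.
Qed.

Lemma big_pred1_seq (T : eqType) (V : nmodType) (s : seq T) (x : T) (f : T -> V) :
  uniq s -> x \in s -> \sum_(y <- s | y == x) f y = f x.
Proof.
move=> us xs; rewrite (big_rem x) //= eqxx big_seq_cond big1 ?addr0 // => y /andP [ys /eqP yx].
by move: ys; rewrite yx mem_rem_uniqF.
Qed.

Lemma ltn_sub_count (T : eqType) (a1 a2 : pred T) (s : seq T) x :
  subpred a1 a2 -> x \in s -> a2 x -> ~~ a1 x -> (count a1 s < count a2 s)%N.
Proof.
move=> a12 + a2x a1x; elim: s => [//|y s IH]; rewrite in_cons /=.
case/orP => [/eqP <- | xs]; first by rewrite a2x (negbTE a1x) ltnS sub_count.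
case a1y: (a1 y); first by rewrite a12 // !add1n ltnS IH.
by rewrite add0n (leq_trans (IH xs)) // leq_addl.
Qed.

Lemma exists_maximal (P : eqType) (le : rel P)
    (le_anti : forall x y, le x y -> le y x -> x = y)
    (le_trans : forall x y z, le x y -> le y z -> le x z) (D : seq P) :
  D != [::] -> exists2 b, b \in D & forall b', b' \in D -> le b b' -> b' = b.
Proof.
elim: D => [//|x [|y D] IH] _.
  by exists x => [|b']; rewrite mem_seq1 // => /eqP ->.
have [b bD bmax] := IH isT.
have [xb|xb] := boolP (le b x); last first.
  exists b; first by rewrite in_cons bD orbT.
  by move=> b'; rewrite in_cons => /orP [/eqP -> bx | /bmax //]; rewrite bx in xb.
exists x; first exact: mem_head.
move=> b'; rewrite in_cons => /orP [/eqP -> // | b'D xb'].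
have b'b := bmax b' b'D (le_trans _ _ _ xb xb').
by apply: le_anti => //; rewrite b'b.
Qed.

Section Coefficients.
Variables (R : pzRingType) (K : eqType).

Definition coef (l : seq (K * R)) k := \sum_(q <- l | q.1 == k) q.2.

Definition scale_coefs r (l : seq (K * R)) := [seq (q.1, r * q.2) | q <- l].

Lemma coef_cat l1 l2 k : coef (l1 ++ l2) k = coef l1 k + coef l2 k.
Proof. by rewrite /coef big_cat. Qed.

Lemma coef_scale r l k : coef (scale_coefs r l) k = r * coef l k.
Proof. by rewrite /coef big_map mulr_sumr. Qed.

Lemma coef_notin l k : k \notin map fst l -> coef l k = 0.
Proof.
move=> kl; rewrite /coef big_seq_cond big1 // => q /andP [ql /eqP qk].
by move: kl; rewrite -qk map_f.
Qed.

Lemma coef_uniq l q : uniq (map fst l) -> q \in l -> coef l q.1 = q.2.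
Proof.
elim: l => [//|q' l IH] /= /andP [q'l ul]; rewrite in_cons /coef big_cons.
case/orP => [/eqP -> | ql]; last first.
  by rewrite ifN; [exact: IH | apply: contraNneq q'l => ->; exact: map_f].
rewrite eqxx big_seq_cond big1 ?addr0 // => q'' /andP [q''l /eqP q''q'].
by move: q'l; rewrite -q''q' map_f.
Qed.

End Coefficients.

Lemma sum_coef_pairs (R : pzRingType) (A : eqType) (l : seq ((A * nat) * R)) b (v : nat -> R) n :
  {in l, forall q, q.1.1 = b -> (q.1.2 < n)%N} ->
  \sum_(m < n) coef l (b, val m) * v m = \sum_(q <- l | q.1.1 == b) q.2 * v q.1.2.
Proof.
move=> ln; under eq_bigr => m _ do rewrite /coef mulr_suml.
rewrite (exchange_big_dep (fun q => q.1.1 == b)) => [|m q _ /eqP ->] //=.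
rewrite big_seq_cond [RHS]big_seq_cond; apply: eq_bigr => q /andP [ql /eqP qb].
rewrite (eq_bigl (fun m : 'I_n => m == q.1.2 :> nat)) => [|m].
  by rewrite (big_ord1_eq _ (fun m => q.2 * v m)) ln.
by rewrite [q.1]surjective_pairing qb xpair_eqE eqxx eq_sym.
Qed.

Section PIDImageBasis.
Variables (R : idomainType) (J : eqType) (V : lmodType R) (t : J -> {scalar V}).

(* [xs] is a family in [S] whose images under the coordinate forms [t j] form
   a basis of the image of [S]. *)
Definition image_basis (S : V -> Prop) (xs : seq V) :=
  [/\ {in xs, forall x, S x},
      forall x, S x -> exists c : seq R,
        forall j, t j x = t j (\sum_(i < size xs) c`_i *: xs`_i)
    & forall c : seq R, (forall j, t j (\sum_(i < size xs) c`_i *: xs`_i) = 0) ->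
        forall i, (i < size xs)%N -> c`_i = 0].

Lemma comb_cons (x : V) xs (r : R) c :
  \sum_(i < size (x :: xs)) (r :: c)`_i *: (x :: xs)`_i =
  r *: x + \sum_(i < size xs) c`_i *: xs`_i.
Proof. by rewrite big_ord_recl. Qed.

Lemma pid_image_basis (hR : PID R) (T : seq J) (S : V -> Prop) :
  S 0 -> (forall r x y, S x -> S y -> S (r *: x + y)) ->
  (forall x j, S x -> j \notin T -> t j x = 0) ->
  exists xs, image_basis S xs.
Proof.
elim: T S => [|j0 T IH] S S0 Slin Ssupp.
  exists [::]; split => // x Sx; exists [::] => j.
  by rewrite big_ord0 linear0 Ssupp.
have SZ r x : S x -> S (r *: x) by move=> Sx; rewrite -[r *: x]addr0; exact: Slin.
pose ideal r := exists x, S x /\ t j0 x = r.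
have ideal_ideal : is_ideal ideal.
  split; first by exists 0; rewrite linear0.
  - move=> _ _ [x [Sx <-]] [y [Sy <-]]; exists (1 *: x + y).
    by split; [exact: Slin | rewrite linearP mul1r].
  - by move=> r _ [x [Sx <-]]; exists (r *: x); split; [exact: SZ | rewrite linearZ].
have [g gP] := hR ideal ideal_ideal.
have [w [Sw wg]] : ideal g by apply/gP; exists 1; rewrite mul1r.
have [xs [xsS xs_span xs_free]] : exists xs, image_basis (fun x => S x /\ t j0 x = 0) xs.
  apply: IH.
  - by split; [|rewrite linear0].
  - by move=> r x y [Sx x0] [Sy y0]; split; [exact: Slin | rewrite linearP x0 y0 mulr0 addr0].
  - move=> x j [Sx x0]; have [-> //|jj0 jT] := eqVneq j j0.
    by rewrite Ssupp // in_cons negb_or jj0.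
have [g0 | gn0] := eqVneq g 0.
  exists xs; split; first by move=> x /xsS [].
    move=> x Sx; apply: xs_span; split => //.
    have [r ->] : exists r, t j0 x = r * g by apply/gP; exists x.
    by rewrite g0 mulr0.
  exact: xs_free.
exists (w :: xs); split.
- by move=> x; rewrite in_cons => /orP [/eqP -> //|/xsS []].
- move=> x Sx.
  have [r xr] : exists r, t j0 x = r * g by apply/gP; exists x.
  have [|c cP] := xs_span ((- r) *: w + x).
    by split; [exact: Slin | rewrite linearP xr wg mulNr addNr].
  exists (r :: c) => j; rewrite comb_cons linearD -cP linearD !linearZ /=.
  by rewrite mulNr addrA addrN add0r.
- case=> [|c0 c] c_free; first by move=> i; rewrite nth_nil.
  have c00 : c0 = 0.
    have := c_free j0; rewrite comb_cons linearD linearZ /= wg linear_sum big1 ?addr0.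
      by move/eqP; rewrite mulf_eq0 (negbTE gn0) orbF => /eqP.
    by move=> i _; rewrite linearZ /=; have [_ ->] := xsS _ (mem_nth 0 (ltn_ord i)); rewrite mulr0.
  have c0s : forall i, (i < size xs)%N -> c`_i = 0.
    by apply: xs_free => j; have := c_free j; rewrite comb_cons c00 scale0r add0r.
  by case=> [|i] //= /c0s.
Qed.

End PIDImageBasis.

Section GeneratorCombinations.
Variables (R : pzRingType) (P : Type) (le : rel P).
Hypothesis le_trans : forall x y z, le x y -> le y z -> le x z.
Variables (N : @pmod R P le) (K : eqType) (deg : K -> P) (gen : forall k, N (deg k)).

Definition gen_comb a (l : seq (K * R)) : N a :=
  \sum_(q <- l) q.2 *: pm_map N (deg q.1) a (gen q.1).

Definition below a (l : seq (K * R)) := all (fun q => le (deg q.1) a) l.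

Definition generated a (y : N a) := exists l, below a l /\ y = gen_comb a l.

Lemma gen_comb_cat a l1 l2 : gen_comb a (l1 ++ l2) = gen_comb a l1 + gen_comb a l2.
Proof. by rewrite /gen_comb big_cat. Qed.

Lemma gen_comb_scale a r l : gen_comb a (scale_coefs r l) = r *: gen_comb a l.
Proof. by rewrite /gen_comb big_map scaler_sumr; apply: eq_bigr => q _; rewrite scalerA. Qed.

Lemma below_cat a l1 l2 : below a (l1 ++ l2) = below a l1 && below a l2.
Proof. exact: all_cat. Qed.

Lemma below_scale a r l : below a (scale_coefs r l) = below a l.
Proof. exact: all_map. Qed.

Lemma below_trans b a l : le b a -> below b l -> below a l.
Proof. by move=> ba /allP bl; apply/allP => q /bl qb; exact: le_trans qb ba. Qed.

Lemma pm_map_gen_comb b a l : le b a -> below b l ->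
  pm_map N b a (gen_comb b l) = gen_comb a l.
Proof.
move=> ba /allP bl; rewrite linear_sum; apply: eq_big_seq => q /bl qb.
by rewrite linearZ -pm_comp.
Qed.

Lemma generated0 a : generated (0 : N a).
Proof. by exists [::]; rewrite /gen_comb big_nil. Qed.

Lemma generatedD a (y z : N a) : generated y -> generated z -> generated (y + z).
Proof.
move=> [l [la ->]] [m [ma ->]]; exists (l ++ m).
by rewrite below_cat la ma gen_comb_cat.
Qed.

Lemma generatedZ a r (y : N a) : generated y -> generated (r *: y).
Proof. by move=> [l [la ->]]; exists (scale_coefs r l); rewrite below_scale gen_comb_scale. Qed.

Lemma generated_sum a (I : Type) (s : seq I) (f : I -> N a) :
  (forall i, generated (f i)) -> generated (\sum_(i <- s) f i).
Proof.
move=> fg; elim: s => [|x s IH]; first by rewrite big_nil; apply: generated0.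
by rewrite big_cons; apply: generatedD.
Qed.

Lemma generated_pm_map b a (y : N b) : le b a -> generated y -> generated (pm_map N b a y).
Proof.
by move=> ba [l [lb ->]]; exists l; rewrite pm_map_gen_comb // (below_trans ba).
Qed.

Lemma generated_gen (le_refl : forall x, le x x) k : generated (gen k).
Proof.
exists [:: (k, 1)]; rewrite /below /= le_refl.
by rewrite /gen_comb big_seq1 scale1r pm_id.
Qed.

End GeneratorCombinations.

Lemma graded_freeP (R : pzRingType) (P : Type) (le : rel P) (M : @pmod R P le) :
  graded_free M <-> exists (I : eqType) (deg : I -> P) (gen : forall i, M (deg i)),
    (forall a (x : M a), generated gen x) /\
    (forall a l, uniq (map fst l) -> below le deg a l -> gen_comb gen a l = 0 ->
       all (fun q => q.2 == 0) l).
Proof.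
split=> [[I [deg [gen [Mspan Mfree]]]] | [I [deg [gen [Mgen Mfree]]]]].
  exists I, deg, gen; split.
    move=> a x; have [s [c [sa ->]]] := Mspan a x.
    exists (zip s c); split => //.
    by apply/allP => q /mem_zip1 /(allP sa).
  move=> a l ul la l0.
  have := Mfree a (unzip1 l) (unzip2 l) ul; rewrite !size_map zip_unzip all_map.
  by move/(_ erefl la l0); rewrite all_map.
exists I, deg, gen; split.
  move=> a x; have [l [la ->]] := Mgen a x.
  by exists (unzip1 l), (unzip2 l); rewrite zip_unzip all_map.
move=> a s c us cs sa l0.
have fst_zip : map fst (zip s c) = s by apply: unzip1_zip; rewrite cs.
have snd_zip : map snd (zip s c) = c by apply: unzip2_zip; rewrite cs.
have := Mfree a (zip s c); rewrite fst_zip => /(_ us _ l0).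
rewrite {1}/below -(all_map fst (fun i => le (deg i) a)) fst_zip => /(_ sa).
by rewrite -{2}snd_zip all_map.
Qed.

Section Coordinates.
Variables (R : pzRingType) (P : Type) (le : rel P).
Hypothesis le_trans : forall x y z, le x y -> le y z -> le x z.
Variables (F : @pmod R P le) (J : eqType) (dg : J -> P) (g : forall j, F (dg j)).
Hypothesis F_gen : forall a (z : F a), generated g z.
Hypothesis F_free : forall a l, uniq (map fst l) -> below le dg a l ->
  gen_comb g a l = 0 -> all (fun q => q.2 == 0) l.

Lemma gen_comb_regroup a l ks : uniq ks -> {subset map fst l <= ks} ->
  gen_comb g a l = \sum_(k <- ks) coef l k *: pm_map F (dg k) a (g k).
Proof.
move=> uks lks; rewrite /coef.
under [RHS]eq_bigr => k _ do rewrite scaler_suml.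
rewrite (exchange_big_dep xpredT) //=; apply: eq_big_seq => q ql.
rewrite (eq_bigl (fun k => k == q.1)) => [|k]; last by rewrite eq_sym.
by rewrite big_pred1_seq // lks // map_f.
Qed.

Lemma gen_comb_eq0 a l : below le dg a l -> gen_comb g a l = 0 -> forall j, coef l j = 0.
Proof.
move=> la l0 j; set ks := undup (map fst l).
pose l' := [seq (k, coef l k) | k <- ks].
have fst_l' : map fst l' = ks by rewrite -map_comp map_id.
have l'a : below le dg a l'.
  apply/allP => _ /mapP [k + ->]; rewrite mem_undup => /mapP [q ql ->].
  exact: (allP la q ql).
have l'0 : gen_comb g a l' = 0.
  rewrite -[RHS]l0 (@gen_comb_regroup a l ks) ?undup_uniq //; first by rewrite /gen_comb big_map.
  by move=> k; rewrite mem_undup.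
have := @F_free a l'; rewrite fst_l' => /(_ (undup_uniq _) l'a l'0)/allP /= l'_0.
have [jks|jks] := boolP (j \in ks); first by apply/eqP; apply: (l'_0 (j, coef l j)); exact: map_f.
by apply: coef_notin; rewrite -mem_undup.
Qed.

Lemma gen_comb_inj a l1 l2 : below le dg a l1 -> below le dg a l2 ->
  gen_comb g a l1 = gen_comb g a l2 -> coef l1 =1 coef l2.
Proof.
move=> l1a l2a l12 j; apply/eqP; rewrite -subr_eq0; apply/eqP.
have := @gen_comb_eq0 a (l1 ++ scale_coefs (-1) l2).
rewrite below_cat below_scale l1a l2a gen_comb_cat gen_comb_scale l12 scaleN1r subrr.
by move/(_ isT erefl j); rewrite coef_cat coef_scale mulN1r.
Qed.

Definition coefs_of a (z : F a) : seq (J * R) :=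
  proj1_sig (constructive_indefinite_description _ (F_gen z)).

Lemma coefs_ofP a (z : F a) : below le dg a (coefs_of z) /\ z = gen_comb g a (coefs_of z).
Proof. exact: proj2_sig (constructive_indefinite_description _ (F_gen z)). Qed.

Lemma coef_coefs_of_gen_comb a l : below le dg a l -> coef (coefs_of (gen_comb g a l)) =1 coef l.
Proof.
move=> la; have [ca cl] := coefs_ofP (gen_comb g a l).
exact: (gen_comb_inj ca la (esym cl)).
Qed.

Lemma coef_coefs_of_is_scalar a j : scalar (fun z : F a => coef (coefs_of z) j).
Proof.
move=> r x y; have [xa {1}->] := coefs_ofP x; have [ya {1}->] := coefs_ofP y.
rewrite -gen_comb_scale -gen_comb_cat coef_coefs_of_gen_comb ?coef_cat ?coef_scale //.
by rewrite below_cat below_scale xa ya.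
Qed.

Definition coord a j : {scalar F a} := scalar_of (@coef_coefs_of_is_scalar a j).

Lemma coord_gen_comb a l j : below le dg a l -> coord a j (gen_comb g a l) = coef l j.
Proof. by move=> la; apply: coef_coefs_of_gen_comb. Qed.

Lemma coord_pm_map b a (z : F b) j : le b a -> coord a j (pm_map F b a z) = coord b j z.
Proof.
move=> ba; have [zb ->] := coefs_ofP z.
rewrite pm_map_gen_comb // !coord_gen_comb //; exact: below_trans zb.
Qed.

Lemma coord_notin a (z : F a) j : j \notin map fst (coefs_of z) -> coord a j z = 0.
Proof. exact: coef_notin. Qed.

Lemma coord_le a (z : F a) j : coord a j z != 0 -> le (dg j) a.
Proof.
have [za _] := coefs_ofP z.
have [/mapP [q ql ->] _ | jz] := boolP (j \in map fst (coefs_of z)); first exact: (allP za q ql).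
by rewrite coord_notin // eqxx.
Qed.

Lemma coord_expand a (z : F a) :
  exists ks, z = \sum_(k <- ks) coord a k z *: pm_map F (dg k) a (g k).
Proof.
have [za zc] := coefs_ofP z; set ks := undup (map fst (coefs_of z)); exists ks.
rewrite {1}zc (@gen_comb_regroup _ _ ks) ?undup_uniq // => k.
by rewrite mem_undup.
Qed.

End Coordinates.

Section Retract.
Variables (R : idomainType) (P : eqType) (le : rel P).
Hypothesis hR : PID R.
Hypotheses (le_refl : forall x, le x x) (le_anti : forall x y, le x y -> le y x -> x = y)
  (le_trans : forall x y z, le x y -> le y z -> le x z).
Variables (F : @pmod R P le) (J : eqType) (dg : J -> P) (g : forall j, F (dg j)).
Hypothesis F_gen : forall a (z : F a), generated g z.
Hypothesis F_free : forall a l, uniq (map fst l) -> below le dg a l ->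
  gen_comb g a l = 0 -> all (fun q => q.2 == 0) l.
Variables (M : @pmod R P le) (i : forall a, {linear M a -> F a}) (p : forall a, {linear F a -> M a}).
Hypotheses (i_natural : forall a b x, le a b -> i b (pm_map M a b x) = pm_map F a b (i a x))
  (p_natural : forall a b x, le a b -> p b (pm_map F a b x) = pm_map M a b (p a x))
  (p_iK : forall a x, p a (i a x) = x) (M_fg : forall a, fg_module (M a)).

Local Notation coord := (coord F_gen F_free).

Lemma coord_i_support a : exists T : seq J, forall (m : M a) j, coord a j (i a m) != 0 -> j \in T.
Proof.
have [s sP] := M_fg a.
exists (flatten [seq map fst (coefs_of F_gen (i a x)) | x <- s]) => m j.
apply: contraR => jT; have [c ->] := sP m.
rewrite !linear_sum big_seq big1 // => q /mem_zip1 qs.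
rewrite !linearZ /= coef_notin ?mulr0 //.
apply: contra jT => jq; apply/flattenP; exists (map fst (coefs_of F_gen (i a q.1))) => //.
exact: (map_f (fun x => map fst (coefs_of F_gen (i a x))) qs).
Qed.

Definition fresh_coord_fun a j (m : M a) := if dg j == a then coord a j (i a m) else 0.

Lemma fresh_coord_fun_is_scalar a j : scalar (@fresh_coord_fun a j).
Proof. by rewrite /fresh_coord_fun; case: eqP => _ r x y; rewrite ?linearP // mulr0 addr0. Qed.

Definition fresh_coord a j : {scalar M a} := scalar_of (@fresh_coord_fun_is_scalar a j).

Lemma fresh_coord_on a j (m : M a) : dg j = a -> fresh_coord a j m = coord a j (i a m).
Proof. by rewrite /= /fresh_coord_fun => ->; rewrite eqxx. Qed.

Lemma fresh_coord_off a j (m : M a) : dg j != a -> fresh_coord a j m = 0.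
Proof. by rewrite /= /fresh_coord_fun => /negbTE ->. Qed.

Lemma exists_fresh_basis a : exists xs, image_basis (fresh_coord a) (fun=> True) xs.
Proof.
have [T TP] := coord_i_support a.
apply: (pid_image_basis hR (T := T)) => // m j _ jT.
have [/fresh_coord_on -> | /fresh_coord_off //] := eqVneq (dg j) a.
by apply/eqP; apply: contraR jT; exact: TP.
Qed.

Definition fresh_basis a := proj1_sig (constructive_indefinite_description _ (exists_fresh_basis a)).

Lemma fresh_basisP a : image_basis (fresh_coord a) (fun=> True) (fresh_basis a).
Proof. exact: proj2_sig (constructive_indefinite_description _ (exists_fresh_basis a)). Qed.

Definition gen_index := {x : P * nat | (x.2 < size (fresh_basis x.1))%N}.
Definition deg (x : gen_index) := (val x).1.
Definition idx (x : gen_index) := (val x).2.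
Definition gen (x : gen_index) : M (deg x) := (fresh_basis (deg x))`_(idx x).

Lemma generated_fresh_basis d (n : 'I_(size (fresh_basis d))) : generated gen (fresh_basis d)`_n.
Proof. exact: (generated_gen gen le_refl (exist _ (d, val n) (ltn_ord n))). Qed.

Lemma fresh_coord_reduce d (w : M d) :
  exists w', generated gen (w - w') /\ forall j, dg j = d -> coord d j (i d w') = 0.
Proof.
have [_ spans _] := fresh_basisP d; have [c cP] := spans w I.
exists (w - \sum_(n < size (fresh_basis d)) c`_n *: (fresh_basis d)`_n); split.
  rewrite subKr; apply: generated_sum => n; apply: generatedZ; exact: generated_fresh_basis.
by move=> j jd; rewrite -(fresh_coord_on _ jd) linearB cP subrr.
Qed.

Lemma generated_p_support a (z : F a) :
  (forall k, coord a k z != 0 -> generated gen (p (dg k) (g k))) -> generated gen (p a z).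
Proof.
move=> zk; have [ks ->] := coord_expand F_gen F_free z.
rewrite linear_sum; apply: generated_sum => k; rewrite linearZ_LR.
have [-> | kz] := eqVneq (coord a k z) 0; first by rewrite scale0r; exact: generated0.
have ka := coord_le kz.
by rewrite p_natural //; apply/generatedZ/generated_pm_map/zk.
Qed.

Definition lt_deg j k := le (dg j) (dg k) && (dg j != dg k).

Lemma generated_p_gen a (T : seq J) :
    (forall (m : M a) k, coord a k (i a m) != 0 -> k \in T) ->
  forall j, j \in T -> le (dg j) a -> generated gen (p (dg j) (g j)).
Proof.
(* Induction on the number of elements of [T] of degree strictly below [dg j]. *)
move=> TP j; have [n] := ubnP (count (lt_deg^~ j) T).
elim: n j => // n IH j lt_n jT ja.
have [w [gw w0]] := fresh_coord_reduce (p (dg j) (g j)).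
rewrite -(subrK w (p _ (g j))); apply: generatedD => //.
rewrite -(p_iK w); apply: generated_p_support => k kw.
have kj := coord_le kw.
have dkj : dg k != dg j by apply: contraNneq kw => /w0 ->.
have kT : k \in T by apply: (TP (pm_map M (dg j) a w)); rewrite i_natural // coord_pm_map.
apply: (IH k _ kT (le_trans kj ja)); rewrite -ltnS (leq_trans _ lt_n) // ltnS.
have sub_lt : subpred (lt_deg^~ k) (lt_deg^~ j).
  move=> x /andP [xk dxk]; rewrite /lt_deg (le_trans xk kj) /=.
  by apply: contraNneq dxk => dxj; apply/eqP/le_anti; rewrite // dxj.
have lt_kj : lt_deg k j by rewrite /lt_deg kj.
have lt_kk : ~~ lt_deg k k by rewrite /lt_deg eqxx andbF.
exact: ltn_sub_count sub_lt kT lt_kj lt_kk.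
Qed.

Lemma generated_all a (y : M a) : generated gen y.
Proof.
have [T TP] := coord_i_support a.
rewrite -(p_iK y); apply: generated_p_support => k ky.
exact: (generated_p_gen TP (TP _ _ ky) (coord_le ky)).
Qed.

Definition fresh_basis_coord d j n := fresh_coord d j (fresh_basis d)`_n.

Lemma coord_i_gen_comb a l b j : below le deg a l -> dg j = b ->
    (forall q, q \in l -> q.2 != 0 -> le b (deg q.1) -> deg q.1 = b) ->
  coord a j (i a (gen_comb gen a l)) = \sum_(q <- l | deg q.1 == b) q.2 * fresh_basis_coord b j (idx q.1).
Proof.
move=> la jb bmax; rewrite !linear_sum [RHS]big_mkcond; apply: eq_big_seq => q ql.
have qa : le (deg q.1) a := allP la q ql.
rewrite linearZ_LR scalarZ i_natural // coord_pm_map //.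
case: eqP => [qb | qb].
  by rewrite -fresh_coord_on ?jb //; congr (_ * _); rewrite /fresh_basis_coord -qb.
have [-> | qn] := eqVneq q.2 0; first by rewrite mul0r.
have [-> | jq] := eqVneq (coord (deg q.1) j (i _ (gen q.1))) 0; first by rewrite mulr0.
by case: qb; apply: bmax; rewrite // -jb; exact: coord_le jq.
Qed.

Definition gen_coefs (l : seq (gen_index * R)) b :=
  mkseq (fun n => coef [seq (val q.1, q.2) | q <- l] (b, n)) (size (fresh_basis b)).

Lemma sum_gen_coefs l b j :
  \sum_(n < size (fresh_basis b)) (gen_coefs l b)`_n * fresh_coord b j (fresh_basis b)`_n =
  \sum_(q <- l | deg q.1 == b) q.2 * fresh_basis_coord b j (idx q.1).
Proof.
under eq_bigr => n _ do rewrite nth_mkseq //.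
rewrite (@sum_coef_pairs _ _ _ b (fresh_basis_coord b j)) => [|_ /mapP [q _ ->] /= <-]; last exact: (valP q.1).
by rewrite big_map.
Qed.

Lemma gen_coefs_key l q : uniq (map fst l) -> q \in l -> (gen_coefs l (deg q.1))`_(idx q.1) = q.2.
Proof.
move=> ul ql; rewrite nth_mkseq; last exact: (valP q.1).
have -> : (deg q.1, idx q.1) = (val q.1, q.2).1 by rewrite /= -surjective_pairing.
apply: coef_uniq; last exact: (map_f (fun q => (val q.1, q.2)) ql).
by rewrite -map_comp (map_comp val fst) map_inj_uniq //; exact: val_inj.
Qed.

Lemma gen_comb_free a l : uniq (map fst l) -> below le deg a l ->
  gen_comb gen a l = 0 -> all (fun q => q.2 == 0) l.
Proof.
move=> ul la l0; apply/allP => q0 q0l; apply/contraT => q0n.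
(* Read the fresh coordinates in a maximal degree [b] of the relation. *)
pose D := [seq deg q.1 | q <- l & q.2 != 0].
have q0D : deg q0.1 \in D.
  by apply: (map_f (fun q => deg q.1)); rewrite mem_filter q0n.
have [|b bD bmax] := @exists_maximal _ le le_anti le_trans D; first by apply: contraTneq q0D => ->.
have [q1 + q1b] := mapP bD; rewrite mem_filter => /andP [q1n q1l].
have [_ _ fresh_free] := fresh_basisP b.
have fresh0 j : fresh_coord b j (\sum_(n < size (fresh_basis b)) (gen_coefs l b)`_n *: (fresh_basis b)`_n) = 0.
  have [jb | jb] := eqVneq (dg j) b; last exact: fresh_coord_off.
  rewrite linear_sum; under eq_bigr do rewrite scalarZ.
  rewrite sum_gen_coefs -(coord_i_gen_comb la jb) ?l0 ?linear0 // => q ql qn.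
  by apply: bmax; apply: (map_f (fun q => deg q.1)); rewrite mem_filter qn.
have := fresh_free _ fresh0 (idx q1.1); rewrite q1b gen_coefs_key // => /(_ (valP q1.1)) q10.
by rewrite q10 eqxx in q1n.
Qed.

Lemma retract_graded_free : graded_free M.
Proof.
apply/graded_freeP; exists gen_index, deg, gen; split.
  exact: generated_all.
exact: gen_comb_free.
Qed.

End Retract.

Theorem theorem1p2 (R : idomainType) (hR : PID R)
  (P : zmodType) (le : rel P) (hP : is_lattice_order le) (hc : compatible le)
  (M : @pmod R P le) (hfg : forall a, fg_module (M a)) :
  graded_projective M <-> graded_free M.
Proof.
have [le_refl le_anti le_trans _ _] := hP.
split=> [[F [i [p [freeF [i_lin i_nat] [p_lin p_nat] p_iK]]]] | freeM]; last first.
  by exists M, (fun _ => id), (fun _ => id).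
have [J [dg [g [F_gen F_free]]]] := (graded_freeP F).1 freeF.
exact: (retract_graded_free hR le_refl le_anti le_trans F_gen F_free
  (i := fun a => linear_of (i_lin a)) (p := fun a => linear_of (p_lin a)) i_nat p_nat p_iK hfg).
Qed.
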